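(* Let $p$ be a prime, $k\ge1$, $\Gamma=\mathbb{Z}_p\,\mathrm{wr}\,\mathbb{Z}^k=\Sigma\rtimes_\alpha\mathbb{Z}^k$ with $\Sigma=\bigoplus_{x\in\mathbb{Z}^k}A_x$, and let $\phi:\Gamma\to\Gamma$ be an automorphism with restriction $\phi'=\phi|_\Sigma$. Then $\phi'(\delta_0)=m\cdot\delta_{x_0}$ for some $x_0\in\mathbb{Z}^k$ and some $0\neq m\in\mathbb{Z}_p$.
   Context: $\mathbb{Z}_p\,\mathrm{wr}\,\mathbb{Z}^k$ is the semidirect product $\Sigma\rtimes_\alpha\mathbb{Z}^k$, where $\Sigma=\bigoplus_{x\in\mathbb{Z}^k}A_x$ (finitely supported elements), each $A_x\cong\mathbb{Z}_p$ is generated by $\delta_x$, and $\alpha(y)(\delta_x)=\delta_{y+x}$ for $y\in\mathbb{Z}^k$. $\Sigma$ is the torsion subgroup, hence characteristic, so $\phi(\Sigma)=\Sigma$. *)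

From mathcomp Require Import all_boot all_algebra.
Set Implicit Arguments. Unset Strict Implicit. Unset Printing Implicit Defensive.
Import GRing.Theory.
Local Open Scope ring_scope.

Definition vec (k : nat) := {ffun 'I_k -> int}.

Definition fsupp (k p : nat) (f : vec k -> 'F_p) : Prop :=
  exists s : seq (vec k), forall x, f x != 0 -> x \in s.

Definition delta (k p : nat) (x : vec k) : vec k -> 'F_p :=
  fun z => (z == x)%:R.

(* alpha(y) g : x |-> g (x - y), so alpha(y) delta_x = delta_(y+x) *)
Definition shift (k p : nat) (y : vec k) (g : vec k -> 'F_p) : vec k -> 'F_p :=
  fun x => g (x - y).

Lemma fsupp_mul (k p : nat) (f g : vec k -> 'F_p) (y : vec k) :
  fsupp f -> fsupp g -> fsupp (fun x => f x + shift y g x).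
Proof.
move=> [s Hs] [t Ht]; exists (s ++ map (fun z => z + y) t) => x.
rewrite mem_cat /shift; case: (f x =P 0) => [->|/eqP /Hs -> //].
rewrite add0r => /Ht H; apply/orP; right; apply/mapP; exists (x - y) => //.
by rewrite subrK.
Qed.

Lemma fsupp_delta (k p : nat) (x : vec k) : fsupp (@delta k p x).
Proof.
exists [:: x] => z; rewrite mem_seq1 /delta.
by case: (z == x); rewrite ?eqxx.
Qed.

(* Gamma = Z_p wr Z^k = Sigma \rtimes_alpha Z^k, elements (f, y) with f finitely supported *)
Definition Gam (k p : nat) := {w : (vec k -> 'F_p) * vec k | fsupp w.1}.

Definition gmul (k p : nat) (a b : Gam k p) : Gam k p :=
  exist (fun w : (vec k -> 'F_p) * vec k => fsupp w.1)
    (fun x => (sval a).1 x + shift (sval a).2 (sval b).1 x, (sval a).2 + (sval b).2)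
    (fsupp_mul (sval a).2 (proj2_sig a) (proj2_sig b)).

Definition gdelta (k p : nat) (x : vec k) : Gam k p :=
  exist (fun w : (vec k -> 'F_p) * vec k => fsupp w.1) (@delta k p x, 0) (fsupp_delta p x).

Definition is_aut (k p : nat) (phi : Gam k p -> Gam k p) : Prop :=
  bijective phi /\ forall a b, phi (gmul a b) = gmul (phi a) (phi b).

(* The automorphism phi preserves the torsion subgroup Sigma, and conjugating
   delta_0 by the translation t_y shows phi(delta_y) = alpha(w y) phi(delta_0),
   where w y is the Z^k-component of phi(t_y) and w is injective.  Writing
   phi^-1(delta_0) = sum_y c_y delta_y and applying phi yields
   (sum_y c_y X^(w y)) * phi(delta_0) = 1 in the group ring F_p[Z^k].  For a
   translation-invariant total order on Z^k (lexicographic), the greatest and the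
   least terms of a product are the products of the greatest and of the least
   terms of the factors; since 1 has a single term, the greatest and least points
   of the support of phi(delta_0) coincide. *)

From mathcomp Require Import all_boot all_order all_algebra.
From Stdlib Require Import ProofIrrelevance FunctionalExtensionality.
Import Order.TTheory GRing.Theory Num.Theory.
Set Implicit Arguments. Unset Strict Implicit. Unset Printing Implicit Defensive.
Local Open Scope ring_scope.

Lemma seq_argmax (T : eqType) (le : rel T) (P : pred T) (s : seq T) :
  total le -> transitive le -> has P s ->
  exists M, [/\ M \in s, P M & forall x, x \in s -> P x -> le x M].
Proof.
move=> le_total le_trans hasP.
have ge_trans : transitive (fun x y => le y x) by move=> y x z /[swap]; apply: le_trans.
have ge_sorted := sort_sorted (fun x y => le_total y x) (filter P s).
case E: (sort _ (filter P s)) ge_sorted => [|M t] sorted_Mt.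
  by move: hasP; rewrite has_count -size_filter -(size_sort (fun x y => le y x)) E.
have : M \in filter P s by rewrite -(mem_sort (fun x y => le y x)) E mem_head.
rewrite mem_filter => /andP[PM Ms]; exists M; split=> // x xs Px.
have : x \in M :: t by rewrite -E mem_sort mem_filter Px.
rewrite inE => /predU1P[-> | xt]; first by case/orP: (le_total M M).
exact: (allP (order_path_min ge_trans sorted_Mt)).
Qed.

Definition ordered_zmod (G : zmodType) (le : rel G) :=
  [/\ total le, transitive le, antisymmetric le &
      forall z, {homo (fun x => x + z) : x y / le x y}].

Section OrderedZmod.
Variables (G : zmodType) (le : rel G).
Hypothesis hle : ordered_zmod le.

Lemma ordered_zmod_ge : ordered_zmod (fun x y => le y x).
Proof.
case: hle => le_total le_trans le_anti le_add; split.
- by move=> x y; apply: le_total.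
- by move=> y x z /[swap]; apply: le_trans.
- by move=> x y /=; rewrite andbC; apply: le_anti.
- by move=> z x y; apply: le_add.
Qed.

Lemma ordered_zmod_leB d x y : le x y -> le (d - y) (d - x).
Proof.
case: hle => _ _ _ /(_ (d - x - y)) le_add /le_add.
have shifted a b : a + (d - a - b) = d - b by rewrite addrCA addrA subrK.
by rewrite !shifted [d - x - y]addrAC shifted.
Qed.

End OrderedZmod.

Section ConvolutionDelta.
Variables (G : zmodType) (R : idomainType) (I : eqType).
Variables (u : G -> R) (su : seq G) (c : I -> R) (w : I -> G) (l : seq I).
Hypotheses (supp_u : forall z, u z != 0 -> z \in su) (l_uniq : uniq l).
Hypothesis w_inj : {in l &, injective w}.
(* In the group ring R[G]: (sum_(i in l) c i X^(w i)) * u = 1. *)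
Hypothesis conv_delta0 : forall x, \sum_(i <- l) c i * u (x - w i) = (x == 0)%:R.

Lemma conv_delta0_max (le : rel G) : ordered_zmod le ->
  exists Mu iM, [/\ u Mu != 0, forall z, u z != 0 -> le z Mu,
    iM \in l /\ c iM != 0, forall i, i \in l -> c i != 0 -> le (w i) (w iM)
    & Mu + w iM = 0].
Proof.
move=> hle; have [le_total le_trans le_anti _] := hle.
have [i il] : exists2 i, i \in l & c i * u (0 - w i) != 0.
  apply/hasP; apply: contraT => /hasPn zero_terms; have := conv_delta0 0.
  rewrite big1_seq => [/eqP|j /andP[_ /zero_terms /negbNE /eqP //]].
  by rewrite eqxx eq_sym oner_eq0.
rewrite mulf_eq0 negb_or => /andP[ci ui].
have supp_u_nonempty : has (fun z => u z != 0) su.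
  by apply/hasP; exists (0 - w i); first exact: supp_u.
have supp_c_nonempty : has (fun i => c i != 0) l by apply/hasP; exists i.
have [Mu [_ uMu Mu_max]] := seq_argmax le_total le_trans supp_u_nonempty.
have [iM [iMl ciM iM_max]] := seq_argmax (fun i j => le_total (w i) (w j))
    (fun j i k => @le_trans (w j) (w i) (w k)) supp_c_nonempty.
pose x := Mu + w iM.
have conv_x : \sum_(i <- l) c i * u (x - w i) = c iM * u Mu.
  rewrite (bigD1_seq iM) //= addrK big1_seq ?addr0 // => j /andP[j_neq jl].
  apply/eqP; rewrite mulf_eq0; apply: contraR j_neq; rewrite negb_or => /andP[cj uj].
  apply/eqP/w_inj => //; apply: le_anti; rewrite iM_max //=.
  have := ordered_zmod_leB hle x (Mu_max _ (supp_u uj) uj).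
  by rewrite subKr /x [Mu + _]addrC addrK.
exists Mu, iM; split=> //; first by move=> z uz; apply: Mu_max => //; apply: supp_u.
have := conv_delta0 x; rewrite conv_x; case: (x =P 0) => // _ /eqP.
by rewrite mulf_eq0 (negbTE ciM) (negbTE uMu).
Qed.

Lemma conv_delta0_monomial (le : rel G) : ordered_zmod le ->
  exists x0, u x0 != 0 /\ forall z, u z != 0 -> z = x0.
Proof.
move=> hle; have [_ le_trans le_anti _] := hle.
have [Mu [iM [uMu Mu_max [iMl ciM] _ MuE]]] := conv_delta0_max hle.
have [mu [im [_ mu_min _ im_min muE]]] := conv_delta0_max (ordered_zmod_ge hle).
have Mu_le_mu : le Mu mu.
  rewrite -[Mu](addrK (w iM)) -[mu](addrK (w im)) MuE muE.
  by have := ordered_zmod_leB hle 0 (im_min iM iMl ciM : le (w im) (w iM)).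
exists Mu; split=> // z uz; apply: le_anti; rewrite Mu_max //=.
exact: le_trans Mu_le_mu (mu_min z uz).
Qed.

End ConvolutionDelta.

Definition vec_lexkey (k : nat) (x : vec k) : seqlexi int := [seq x i | i <- enum 'I_k].

Definition vec_lexle (k : nat) (x y : vec k) : bool := (vec_lexkey x <= vec_lexkey y)%O.

Lemma lexi_map_addr (T : Type) (r : seq T) (f g h : T -> int) :
  (([seq f i | i <- r] : seqlexi int) <= [seq g i | i <- r])%O ->
  (([seq f i + h i | i <- r] : seqlexi int) <= [seq g i + h i | i <- r])%O.
Proof.
elim: r => [//|a r IHr] /=; rewrite !lexi_cons !lerD2r.
by case/andP=> -> /= /implyP fg_le; apply/implyP => /fg_le /IHr.
Qed.

Lemma vec_lexle_ordered (k : nat) : ordered_zmod (@vec_lexle k).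
Proof.
split.
- by move=> x y; apply: le_total.
- by move=> y x z; apply: le_trans.
- move=> x y /le_anti /eq_in_map key_eq; apply/ffunP => i.
  by apply: key_eq; rewrite mem_enum.
- move=> z x y; rewrite /vec_lexle /vec_lexkey.
  have map_addr v : [seq (v + z) i | i <- enum 'I_k] = [seq v i + z i | i <- enum 'I_k].
    by apply: eq_map => i; rewrite ffunE.
  by rewrite !map_addr; apply: lexi_map_addr.
Qed.

Notation lamps a := (sval a).1.
Notation cursor a := (sval a).2.

Section Lamplighter.
Variables (k p : nat).
Implicit Types (a b : Gam k p) (x y : vec k).

Lemma gam_ext a b : lamps a =1 lamps b -> cursor a = cursor b -> a = b.
Proof.
case: a b => [[f y] fs] [[g z] gs] /= /functional_extensionality fg yz.
by apply: eq_sig_hprop => [? ? ?|/=]; [apply: proof_irrelevance | rewrite fg yz].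
Qed.

Lemma fsupp0 : @fsupp k p (fun _ => 0).
Proof. by exists [::] => x; rewrite eqxx. Qed.

Definition gtrans y : Gam k p :=
  exist (fun w : (vec k -> 'F_p) * vec k => fsupp w.1) (fun _ => 0, y) fsupp0.

Definition gunit : Gam k p := gtrans 0.

Fixpoint gpow a n : Gam k p := if n is n'.+1 then gmul a (gpow a n') else gunit.

Lemma shift0 (f : vec k -> 'F_p) : shift 0 f =1 f.
Proof. by move=> x; rewrite /shift subr0. Qed.

Lemma gmul_idem a : gmul a a = a -> a = gunit.
Proof.
move=> aa; have a0 : cursor a = 0.
  by apply: (@addrI _ (cursor a)); rewrite addr0 -[in RHS]aa.
apply: gam_ext => [x|//]; apply: (@addrI _ (lamps a x)).
by rewrite addr0 -[in RHS]aa /= a0 shift0.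
Qed.

Lemma cursor_gpow a n : cursor (gpow a n) = cursor a *+ n.
Proof. by elim: n => [//|n IHn] /=; rewrite IHn mulrS. Qed.

Lemma lamps_gpow a n x : cursor a = 0 -> lamps (gpow a n) x = lamps a x *+ n.
Proof. by move=> a0; elim: n => [//|n IHn] /=; rewrite a0 shift0 IHn mulrS. Qed.

Lemma gpow_prime_eq1 a : prime p -> gpow a p = gunit <-> cursor a = 0.
Proof.
move=> p_pr; split=> [/(congr1 (fun b => cursor b)) | a0].
  rewrite cursor_gpow /= => /ffunP ap0; apply/ffunP => i; move/eqP: (ap0 i).
  by rewrite !ffunE ffunMnE mulrn_eq0 -[p == 0%N]negbK -lt0n prime_gt0 //= => /eqP.
apply: gam_ext => [x|]; last by rewrite cursor_gpow a0 mul0rn.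
by rewrite lamps_gpow // -mulr_natr pchar_Fp_0 // mulr0.
Qed.

Definition delta_prod (g : vec k -> 'F_p) (l : seq (vec k)) : Gam k p :=
  foldr (fun y acc => gmul (gpow (gdelta p y) (g y)) acc) gunit l.

Lemma cursor_delta_prod g l : cursor (delta_prod g l) = 0.
Proof. by elim: l => //= y l IHl; rewrite IHl cursor_gpow mul0rn addr0. Qed.

Lemma lamps_delta_prod g l x : lamps (delta_prod g l) x = \sum_(y <- l) g y * delta p y x.
Proof.
elim: l => [|y l IHl] /=; first by rewrite big_nil.
by rewrite cursor_gpow mul0rn shift0 IHl lamps_gpow // big_cons -mulr_natl natr_Zp.
Qed.

Lemma delta_prod_lamps a s : cursor a = 0 -> (forall x, lamps a x != 0 -> x \in s) ->
  a = delta_prod (lamps a) (undup s).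
Proof.
move=> a0 supp_a; apply: gam_ext => [x|]; last by rewrite cursor_delta_prod.
rewrite lamps_delta_prod; case xs: (x \in undup s).
  rewrite (bigD1_seq x) ?undup_uniq //= /delta eqxx mulr1 big1_seq ?addr0 // => y.
  by case/andP=> yx _; rewrite eq_sym (negbTE yx) mulr0.
rewrite big1_seq => [|y /andP[_ ys]]; last first.
  by rewrite /delta; case: eqP ys => [<-|]; rewrite ?xs ?mulr0.
by apply/eqP; apply: contraFT xs => /supp_a; rewrite mem_undup.
Qed.

Variable phi : Gam k p -> Gam k p.
Hypotheses (p_pr : prime p) (phi_aut : is_aut phi).

Lemma aut_unit : phi gunit = gunit.
Proof.
apply: gmul_idem; rewrite -phi_aut.2; congr phi.
by apply: gam_ext => [x|] /=; rewrite ?shift0 addr0.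
Qed.

Lemma aut_gpow a n : phi (gpow a n) = gpow (phi a) n.
Proof. by elim: n => [|n IHn] /=; rewrite ?aut_unit // phi_aut.2 IHn. Qed.

Lemma cursor_aut_eq0 a : cursor (phi a) = 0 <-> cursor a = 0.
Proof.
split=> [/(gpow_prime_eq1 _ p_pr) phia1 | /(gpow_prime_eq1 _ p_pr) a1];
  apply/(gpow_prime_eq1 _ p_pr).
  by apply: (bij_inj phi_aut.1); rewrite aut_gpow phia1 aut_unit.
by rewrite -aut_gpow a1 aut_unit.
Qed.

Lemma lamps_aut_gmul a b x : cursor a = 0 ->
  lamps (phi (gmul a b)) x = lamps (phi a) x + lamps (phi b) x.
Proof. by move=> /cursor_aut_eq0 phia0; rewrite phi_aut.2 /= phia0 shift0. Qed.

Lemma lamps_aut_delta y :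
  lamps (phi (gdelta p y)) =1 shift (cursor (phi (gtrans y))) (lamps (phi (gdelta p 0))).
Proof.
have conj : gmul (gtrans y) (gdelta p 0) = gmul (gdelta p y) (gtrans y).
  by apply: gam_ext => [x|] /=; rewrite ?addr0 ?add0r // /shift /delta subr_eq0.
move=> x; have /(congr1 (fun f => f x)) := congr1 (fun a => lamps (phi a)) conj.
rewrite !phi_aut.2 /= (proj2 (cursor_aut_eq0 (gdelta p y))) // shift0 addrC.
by move/addIr.
Qed.

Lemma cursor_aut_gtrans_inj : injective (fun y => cursor (phi (gtrans y))).
Proof.
move=> y z /= eq_cursor; apply/eqP; rewrite -subr_eq0; apply/eqP.
have split_y : gtrans y = gmul (gtrans (y - z)) (gtrans z).
  by apply: gam_ext => [x|] /=; rewrite ?add0r ?subrK.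
move: eq_cursor; rewrite split_y phi_aut.2 /= => /eqP.
by rewrite -subr_eq0 addrK => /eqP /cursor_aut_eq0.
Qed.

Lemma lamps_aut_delta_prod g l x : lamps (phi (delta_prod g l)) x =
  \sum_(y <- l) g y * shift (cursor (phi (gtrans y))) (lamps (phi (gdelta p 0))) x.
Proof.
elim: l => [|y l IHl] /=; first by rewrite aut_unit big_nil.
rewrite lamps_aut_gmul ?cursor_gpow ?mul0rn // IHl big_cons aut_gpow lamps_gpow.
  by rewrite lamps_aut_delta -mulr_natl natr_Zp.
exact/cursor_aut_eq0.
Qed.

End Lamplighter.

Theorem lemma3p1 (p k : nat) (hp : prime p) (hk : (1 <= k)%N)
  (phi : Gam k p -> Gam k p) (hphi : is_aut phi) :
  exists (x0 : vec k) (m : 'F_p),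
    m != 0 /\ sval (phi (gdelta p (0 : vec k))) = (fun z => m * delta p x0 z, 0 : vec k).
Proof.
have [phi_inv _ phiK] := hphi.1.
pose b := phi_inv (gdelta p 0).
have phi_b : phi b = gdelta p 0 by rewrite phiK.
have b0 : cursor b = 0 by apply/(cursor_aut_eq0 hp hphi); rewrite phi_b.
have [s supp_b] := proj2_sig b.
have [su supp_u] := proj2_sig (phi (gdelta p 0)).
have conv x : \sum_(y <- undup s)
    lamps b y * lamps (phi (gdelta p 0)) (x - cursor (phi (gtrans p y))) = (x == 0)%:R.
  by rewrite -(lamps_aut_delta_prod hp hphi) -delta_prod_lamps ?phi_b.
have [x0 [ux0 supp_x0]] := conv_delta0_monomial supp_u (undup_uniq s)
  (in2W (cursor_aut_gtrans_inj hp hphi)) conv (vec_lexle_ordered k).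
exists x0, (lamps (phi (gdelta p 0)) x0); split=> //.
rewrite [sval _]surjective_pairing; congr pair; last exact/(cursor_aut_eq0 hp hphi).
apply: functional_extensionality => z; rewrite /delta.
case: (z =P x0) => [-> | zx0]; first by rewrite mulr1.
by rewrite mulr0; move: (supp_x0 z); case: eqP => // _ /(_ isT).
Qed.
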